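(* Let $G=(V,E,w)$ be a similarity graph. If $G$ is a ground-truth input, then $G$ has perfect HC-structure. The converse does not hold: there exists a graph with perfect HC-structure that is not a ground-truth input.
   Context: Weights are symmetric and nonnegative, with $w(x,y)=0$ if $(x,y)\notin E$. $G$ is a ground-truth input (similarity graph generated from an ultrametric) if there exist an ultrametric $d$ on $V$ (a metric with $d(x,y)\le\max\{d(x,z),d(y,z)\}$ for all $x,y,z$) and a non-increasing function $f:\mathbb{R}_+\to\mathbb{R}_+$ such that $w(x,y)=f(d(x,y))$ for all $x\ne y\in V$. An HC-tree for $V=\{v_1,\dots,v_n\}$ is a rooted tree with leaf set $V$. For distinct $i,j,k$: $\{i,j|k\}$ holds in $T$ if $\mathrm{LCA}(v_i,v_j)$ is a proper descendant of $\mathrm{LCA}(v_i,v_j,v_k)$; $\{i|j|k\}$ holds if $\mathrm{LCA}(v_i,v_j)=\mathrm{LCA}(v_j,v_k)=\mathrm{LCA}(v_i,v_j,v_k)$. Triplet cost $c_T(i,j,k)$: $w_{ik}+w_{jk}$ if $\{i,j|k\}$; $w_{ij}+w_{jk}$ if $\{i,k|j\}$; $w_{ij}+w_{ik}$ if $\{j,k|i\}$; $w_{ij}+w_{jk}+w_{ik}$ if $\{i|j|k\}$. $\mathrm{TC}_G(T)=\sum c_T(i,j,k)$ and $\mathrm{BC}(G)=\sum\min\{w_{ij}+w_{ik},w_{ij}+w_{jk},w_{ik}+w_{jk}\}$ over unordered triples of distinct indices; $\rho_G(T)=\mathrm{TC}_G(T)/\mathrm{BC}(G)$ (with $0/0=1$,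 $x/0=+\infty$ for $x>0$), $\rho^*_G=\min_T\rho_G(T)$. $G$ has perfect HC-structure if $\rho^*_G=1$, equivalently if some HC-tree $T$ has $\mathrm{TC}_G(T)=\mathrm{BC}(G)$. *)

From HB Require Import structures.
From mathcomp Require Import all_boot all_order all_algebra.
From mathcomp Require Import reals.
Set Implicit Arguments. Unset Strict Implicit. Unset Printing Implicit Defensive.
Import Order.TTheory GRing.Theory Num.Theory.
Local Open Scope ring_scope.

Definition sim_graph (R : realType) (n : nat) (e : rel 'I_n)
  (w : 'I_n -> 'I_n -> R) : Prop :=
  [/\ forall x y, w x y = w y x,
      forall x y, 0 <= w x y &
      forall x y, ~~ e x y -> w x y = 0].

Definition ultrametric (R : realType) (n : nat) (d : 'I_n -> 'I_n -> R) : Prop :=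
  [/\ forall x y, 0 <= d x y,
      forall x y, d x y = 0 <-> x = y,
      forall x y, d x y = d y x,
      forall x y z, d x y <= d x z + d z y &
      forall x y z, d x y <= Num.max (d x z) (d y z)].

(* Ground-truth input: w(x,y) = f(d(x,y)) for x <> y, d ultrametric,
   f : R_+ -> R_+ non-increasing (only its values on R_+ matter). *)
Definition ground_truth (R : realType) (n : nat) (w : 'I_n -> 'I_n -> R) : Prop :=
  exists (d : 'I_n -> 'I_n -> R) (f : R -> R),
    [/\ ultrametric d,
        forall t, 0 <= t -> 0 <= f t,
        forall s t, 0 <= s -> s <= t -> f t <= f s &
        forall x y, x != y -> w x y = f (d x y)].

Inductive hctree (n : nat) : Type :=
| Leaf of 'I_n
| Node of seq (hctree n).

Fixpoint leaves n (t : hctree n) : seq 'I_n :=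
  match t with
  | Leaf v => [:: v]
  | Node ts => flatten (map (@leaves n) ts)
  end.

Fixpoint subtrees n (t : hctree n) : seq (hctree n) :=
  t :: match t with
       | Leaf _ => [::]
       | Node ts => flatten (map (@subtrees n) ts)
       end.

(* every internal node has at least one child, so the leaves of the tree
   are exactly the Leaf constructors *)
Fixpoint wf_tree n (t : hctree n) : bool :=
  match t with
  | Leaf _ => true
  | Node ts => ~~ nilp ts && all (@wf_tree n) ts
  end.

Definition is_hctree n (t : hctree n) : bool :=
  wf_tree t && perm_eq (leaves t) (enum 'I_n).

(* {i,j|k}: LCA(i,j) is a proper descendant of LCA(i,j,k), i.e. some node
   has i and j below it but not k. *)
Definition trip_split n (t : hctree n) (i j k : 'I_n) : bool :=
  has (fun s => [&& i \in leaves s, j \in leaves s & k \notin leaves s])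
      (subtrees t).

Definition trip_cost (R : realType) n (w : 'I_n -> 'I_n -> R) (t : hctree n)
  (i j k : 'I_n) : R :=
  if trip_split t i j k then w i k + w j k
  else if trip_split t i k j then w i j + w j k
  else if trip_split t j k i then w i j + w i k
  else w i j + w j k + w i k.

Definition TC (R : realType) n (w : 'I_n -> 'I_n -> R) (t : hctree n) : R :=
  \sum_(i < n) \sum_(j < n | (i < j)%N) \sum_(k < n | (j < k)%N) trip_cost w t i j k.

Definition BC (R : realType) n (w : 'I_n -> 'I_n -> R) : R :=
  \sum_(i < n) \sum_(j < n | (i < j)%N) \sum_(k < n | (j < k)%N)
    Num.min (w i j + w i k) (Num.min (w i j + w j k) (w i k + w j k)).

Definition perfect_HC (R : realType) n (w : 'I_n -> 'I_n -> R) : Prop :=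
  exists t : hctree n, is_hctree t /\ TC w t = BC w.

From HB Require Import structures.
From mathcomp Require Import all_boot all_order all_algebra.
From mathcomp Require Import reals zify lra.
Set Implicit Arguments.
Unset Strict Implicit.
Unset Printing Implicit Defensive.

Import Order.TTheory GRing.Theory Num.Theory.
Local Open Scope ring_scope.

(* An ultrametric d is realised by a binary tree: pick a point a and split off
   the points farthest from a.  If x, y lie on one side and z on the other,
   the isosceles property of d gives d x y <= d x z and d x y <= d y z.
   Recursing on both sides yields an HC-tree that resolves every triple and
   always separates the third point from the closest pair; as w is a
   non-increasing function of d, each triple then pays the two smallest of
   its weights, which is its share of BC.  Conversely, in a ground-truth
   input the smallest weight of a triangle is attained twice, which fails for
   the triangle with weights 1, 2, 3, although {0 | {1, 2}} is optimal there. *)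

(* The induction principle generated for hctree gives no hypothesis on the
   children of a Node. *)
Section NestedInduction.
Variables (n : nat) (P : hctree n -> Prop).
Hypothesis P_leaf : forall v, P (Leaf v).
Hypothesis P_node : forall ts, foldr (fun t Q => P t /\ Q) True ts -> P (Node ts).

Fixpoint hctree_nested_ind t : P t :=
  match t with
  | Leaf v => P_leaf v
  | Node ts => P_node
      ((fix all_P ts : foldr (fun t Q => P t /\ Q) True ts :=
          match ts with
          | [::] => I
          | t :: ts' => conj (hctree_nested_ind t) (all_P ts')
          end) ts)
  end.

End NestedInduction.

Section TripleSplits.
Variable n : nat.
Implicit Types (t : hctree n) (s : seq 'I_n) (x y z : 'I_n).

Lemma mem_leaves_subtrees t x :
  has (fun u => x \in leaves u) (subtrees t) -> x \in leaves t.
Proof.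
elim/hctree_nested_ind: t => [v|ts IH] /=; first by rewrite orbF.
case/orP => [//|]; elim: ts IH => //= t ts IHts [IHt /IHts {}IHts].
by rewrite has_cat mem_cat => /orP[/IHt|/IHts] ->; rewrite ?orbT.
Qed.

Lemma trip_split_leaves t x y z :
  trip_split t x y z -> (x \in leaves t) && (y \in leaves t).
Proof.
move=> split_xyz; apply/andP; split; apply: mem_leaves_subtrees;
  by apply: sub_has split_xyz => u /and3P[].
Qed.

Lemma trip_split_neq t x y z : trip_split t x y z -> (x != z) && (y != z).
Proof.
apply: contraLR; rewrite negb_and !negbK => /orP[]/eqP<-;
  by rewrite /trip_split (@eq_has _ _ pred0) ?has_pred0 // => u /=;
  case: (x \in _); case: (y \in _).
Qed.

Lemma trip_split_self t x y z :
  x \in leaves t -> y \in leaves t -> z \notin leaves t -> trip_split t x y z.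
Proof. by case: t => [v|ts] xt yt zt; rewrite /trip_split /= xt yt zt. Qed.

Lemma trip_split_node2 t1 t2 x y z :
  trip_split (Node [:: t1; t2]) x y z =
  [|| [&& x \in leaves t1 ++ leaves t2, y \in leaves t1 ++ leaves t2
        & z \notin leaves t1 ++ leaves t2],
      trip_split t1 x y z | trip_split t2 x y z].
Proof. by rewrite /trip_split /= has_cat /= !cats0. Qed.

Definition resolves s t := forall x y z, x \in s -> y \in s -> z \in s ->
  x != y -> x != z -> y != z ->
  [|| trip_split t x y z, trip_split t x z y | trip_split t y z x].

Definition splits_closest {R : numDomainType} (d : 'I_n -> 'I_n -> R) s t :=
  forall x y z, x != y -> z \in s -> trip_split t x y z ->
  d x y <= d x z /\ d x y <= d y z.

Section BinaryNode.
Variables (s : seq 'I_n) (P : pred 'I_n) (t1 t2 : hctree n).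
Hypothesis leaves_t1 : perm_eq (leaves t1) [seq x <- s | ~~ P x].
Hypothesis leaves_t2 : perm_eq (leaves t2) [seq x <- s | P x].

Lemma mem_leaves_node2l x : (x \in leaves t1) = (x \in s) && ~~ P x.
Proof. by rewrite (perm_mem leaves_t1) mem_filter andbC. Qed.

Lemma mem_leaves_node2r x : (x \in leaves t2) = (x \in s) && P x.
Proof. by rewrite (perm_mem leaves_t2) mem_filter andbC. Qed.

Lemma perm_leaves_node2 : perm_eq (leaves t1 ++ leaves t2) s.
Proof.
by apply: perm_trans (perm_cat leaves_t1 leaves_t2) _; rewrite perm_catC perm_filterC.
Qed.

Lemma trip_split_node2_pair x y z : x \in s -> y \in s ->
  P y = P x -> P z = ~~ P x -> trip_split (Node [:: t1; t2]) x y z.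
Proof.
move=> xs ys Py Pz; rewrite trip_split_node2; case Px: (P x) in Py Pz.
- rewrite (@trip_split_self t2) ?orbT // !mem_leaves_node2r;
  by rewrite ?xs ?ys ?Px ?Py ?Pz /= ?andbF.
- rewrite (@trip_split_self t1) ?orbT // !mem_leaves_node2l;
  by rewrite ?xs ?ys ?Px ?Py ?Pz /= ?andbF.
Qed.

Lemma resolves_node2 :
  resolves [seq x <- s | ~~ P x] t1 -> resolves [seq x <- s | P x] t2 ->
  resolves s (Node [:: t1; t2]).
Proof.
move=> res1 res2 x y z xs ys zs xy xz yz.
have lift1 u v r : trip_split t1 u v r -> trip_split (Node [:: t1; t2]) u v r.
  by rewrite trip_split_node2 => ->; rewrite orbT.
have lift2 u v r : trip_split t2 u v r -> trip_split (Node [:: t1; t2]) u v r.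
  by rewrite trip_split_node2 => ->; rewrite !orbT.
(* Either two of x, y, z lie on one side and the third on the other, or all
   three lie in the same subtree. *)
case Px: (P x); case Py: (P y); case Pz: (P z);
  first [ by rewrite (@trip_split_node2_pair x y z) ?Px ?Py ?Pz
        | by rewrite (@trip_split_node2_pair x z y) ?Px ?Py ?Pz ?orbT
        | by rewrite (@trip_split_node2_pair y z x) ?Px ?Py ?Pz ?orbT
        | idtac ].
- have := res2 x y z; rewrite !mem_filter xs ys zs Px Py Pz.
  by move=> /(_ isT isT isT xy xz yz) /or3P[] h; rewrite (lift2 _ _ _ h) ?orbT.
- have := res1 x y z; rewrite !mem_filter xs ys zs Px Py Pz.
  by move=> /(_ isT isT isT xy xz yz) /or3P[] h; rewrite (lift1 _ _ _ h) ?orbT.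
Qed.

Lemma splits_closest_node2 (R : numDomainType) (d : 'I_n -> 'I_n -> R) :
  splits_closest d [seq x <- s | ~~ P x] t1 -> splits_closest d [seq x <- s | P x] t2 ->
  (forall x y z, x \in s -> y \in s -> P y = P x -> P z = ~~ P x ->
     d x y <= d x z /\ d x y <= d y z) ->
  splits_closest d s (Node [:: t1; t2]).
Proof.
move=> close1 close2 cross x y z xy zs; rewrite trip_split_node2.
case/or3P => [/and3P[_ _]|split1|split2].
- by rewrite (perm_mem perm_leaves_node2) zs.
- have /andP[] := trip_split_leaves split1; rewrite !mem_leaves_node2l.
  case/andP=> xs Px /andP[ys Py]; case Pz: (P z).
    by apply: cross; rewrite ?Pz ?(negPf Px) ?(negPf Py).
  by apply: close1 split1; rewrite // mem_filter Pz.
- have /andP[] := trip_split_leaves split2; rewrite !mem_leaves_node2r.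
  case/andP=> xs Px /andP[ys Py]; case Pz: (P z).
    by apply: close2 split2; rewrite // mem_filter Pz.
  by apply: cross; rewrite ?Pz ?Px ?Py.
Qed.

End BinaryNode.
End TripleSplits.

Lemma size_filter_lt (T : Type) (p : pred T) s :
  has (predC p) s -> (size (filter p s) < size s)%N.
Proof. by rewrite has_count size_filter -(count_predC p); lia. Qed.

Section UltrametricTree.
Variables (R : realType) (n : nat) (d : 'I_n -> 'I_n -> R).
Hypothesis d_ultra : ultrametric d.

Lemma ultra_le_max a x y : d x y <= Num.max (d a x) (d a y).
Proof. by case: d_ultra => _ _ dC _ dU; rewrite !(dC a). Qed.

Lemma ultra_isosceles a u z : d a u < d a z -> d u z = d a z.
Proof.
move=> lt_uz; apply/eqP; rewrite eq_le (le_trans (ultra_le_max a u z)) /=;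
  last by rewrite ge_max (ltW lt_uz) lexx.
have := ultra_le_max u a z; case: d_ultra => _ _ dC _ _.
by rewrite le_max (dC u a) leNgt lt_uz.
Qed.

Lemma ultra_closest_near a x y z : d a x < d a z -> d a y < d a z ->
  d x y <= d x z /\ d x y <= d y z.
Proof.
move=> lt_xz lt_yz; rewrite (ultra_isosceles lt_xz) (ultra_isosceles lt_yz).
suff lt_xy : d x y < d a z by split; apply: ltW.
by apply: le_lt_trans (ultra_le_max a x y) _; rewrite gt_max lt_xz.
Qed.

Lemma ultra_closest_far a x y z : d a z < d a x -> d a y = d a x ->
  d x y <= d x z /\ d x y <= d y z.
Proof.
move=> lt_zx eq_yx; have lt_zy : d a z < d a y by rewrite eq_yx.
case: d_ultra => _ _ dC _ _.
rewrite (dC x z) (dC y z) (ultra_isosceles lt_zx) (ultra_isosceles lt_zy) eq_yx.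
by have := ultra_le_max a x y; rewrite eq_yx maxxx.
Qed.

Definition farthest a s x := all (fun y => d a y <= d a x) s.

Lemma farthest_lt a s x z : ~~ farthest a s x -> farthest a s z -> d a x < d a z.
Proof.
by case/allPn=> y ys; rewrite -ltNge => lt_xy /allP/(_ y ys); apply: lt_le_trans.
Qed.

Lemma farthest_eq a s x y : x \in s -> y \in s ->
  farthest a s x -> farthest a s y -> d a x = d a y.
Proof.
move=> xs ys /allP/(_ y ys) le_yx /allP/(_ x xs) le_xy.
by apply/eqP; rewrite eq_le le_xy.
Qed.

Lemma ultra_closest_farthest a s x y z : x \in s -> y \in s ->
  farthest a s y = farthest a s x -> farthest a s z = ~~ farthest a s x ->
  d x y <= d x z /\ d x y <= d y z.
Proof.
move=> xs ys; case Fx: (farthest a s x) => Fy Fz.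
- by apply: (@ultra_closest_far a); [apply: (@farthest_lt a s); rewrite ?Fz |
    apply: (@farthest_eq a s); rewrite ?Fx ?Fy].
- by apply: (@ultra_closest_near a); apply: (@farthest_lt a s); rewrite ?Fx ?Fy ?Fz.
Qed.

Fixpoint ultra_tree fuel s : hctree n :=
  match fuel, s with
  | fuel'.+1, [:: a] => Leaf a
  | fuel'.+1, a :: _ => Node [:: ultra_tree fuel' [seq x <- s | ~~ farthest a s x];
                              ultra_tree fuel' [seq x <- s | farthest a s x]]
  | _, _ => Node [::]
  end.

Lemma has_farthest a s : s != [::] -> has (farthest a s) s.
Proof.
case: s => // x s _; set s' := x :: s.
have [m m_s m_max] := @arg_maxP _ R _ x (mem s') (d a) (mem_head x s).
by apply/hasP; exists m => //; apply/allP => y; apply: m_max.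
Qed.

Lemma farthest_self a s b : b \in s -> b != a -> farthest a s a = false.
Proof.
case: d_ultra => d_ge0 d_eq0 _ _ _ bs ba; apply/negbTE/allPn; exists b => //.
rewrite -ltNge (iffRL (d_eq0 a a) erefl) lt_def d_ge0 andbT.
by apply: contra_neq ba => /d_eq0.
Qed.

Lemma ultra_tree_spec fuel s : uniq s -> s != [::] -> (size s <= fuel)%N ->
  let t := ultra_tree fuel s in
  [/\ wf_tree t, perm_eq (leaves t) s, splits_closest d s t & resolves s t].
Proof.
elim: fuel s => [|fuel IH] [|a [|b s]] // uniq_s _ size_s.
  split=> //= [x y z xy _|x y z]; rewrite ?mem_seq1.
  - rewrite /trip_split /= orbF !mem_seq1 => /and3P[/eqP xa /eqP ya _].
    by rewrite xa ya eqxx in xy.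
  - by move=> /eqP-> /eqP->; rewrite eqxx.
set s' := [:: a, b & s] in uniq_s size_s *; set F := farthest a s'.
have a_near : F a = false.
  apply: (@farthest_self a s' b); first by rewrite !inE eqxx orbT.
  by move: uniq_s; rewrite /= inE negb_or eq_sym => /andP[/andP[]].
have near_ne : has (predC F) s' by apply/hasP; exists a; rewrite ?mem_head //= a_near.
have far_ne : has F s' := @has_farthest a s' isT.
have size_near : (size [seq x <- s' | ~~ F x] < fuel.+1)%N.
  by apply: leq_trans (size_filter_lt _) size_s; apply: sub_has far_ne => x /= ->.
have size_far : (size [seq x <- s' | F x] < fuel.+1)%N.
  exact: leq_trans (size_filter_lt near_ne) size_s.
have := IH _ (filter_uniq (fun x => ~~ F x) uniq_s).
rewrite -has_filter => /(_ near_ne size_near) [wf1 leaves1 close1 res1].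
have := IH _ (filter_uniq F uniq_s).
rewrite -has_filter => /(_ far_ne size_far) [wf2 leaves2 close2 res2].
have -> : ultra_tree fuel.+1 s' = Node [:: ultra_tree fuel [seq x <- s' | ~~ F x];
                                          ultra_tree fuel [seq x <- s' | F x]] by [].
split.
- by rewrite /= wf1 wf2.
- by rewrite /= cats0 (perm_leaves_node2 leaves1 leaves2).
- apply: (splits_closest_node2 leaves1 leaves2 close1 close2).
  by move=> x y z; apply: ultra_closest_farthest.
- exact: resolves_node2 leaves1 leaves2 res1 res2.
Qed.

End UltrametricTree.

Lemma min_pair_sums (R : realDomainType) (a b c : R) :
  Num.min (a + b) (Num.min (a + c) (b + c)) = a + b + c - Num.max a (Num.max b c).
Proof.
by case: (leP b c) => ?; case: (leP (a + c) (b + c)) => ?; do ![case: leP => ?]; lra.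
Qed.

Section TripletCost.
Variables (R : realType) (n : nat) (w : 'I_n -> 'I_n -> R) (t : hctree n).
Hypothesis w_sym : forall x y, w x y = w y x.
Hypothesis split_heaviest : forall x y z, x != y -> trip_split t x y z ->
  w x z <= w x y /\ w y z <= w x y.

Lemma trip_cost_resolved i j k : i != j -> i != k -> j != k ->
  [|| trip_split t i j k, trip_split t i k j | trip_split t j k i] ->
  trip_cost w t i j k =
  Num.min (w i j + w i k) (Num.min (w i j + w j k) (w i k + w j k)).
Proof.
move=> ij ik jk; rewrite min_pair_sums /trip_cost.
case split_ijk: (trip_split t i j k).
  have [le_ik le_jk] := split_heaviest ij split_ijk.
  by rewrite max_l ?ge_max ?le_ik ?le_jk //; lra.
case split_ikj: (trip_split t i k j).
  have [le_ij le_kj] := split_heaviest ik split_ikj.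
  rewrite (w_sym k j) in le_kj.
  by rewrite (max_l le_kj) (max_r le_ij); lra.
case split_jki: (trip_split t j k i) => // _.
have [le_ji le_ki] := split_heaviest jk split_jki.
rewrite (w_sym j i) (w_sym k i) in le_ji le_ki.
by rewrite (max_r le_ki) (max_r le_ji); lra.
Qed.

Lemma TC_eq_BC : resolves (enum 'I_n) t -> TC w t = BC w.
Proof.
move=> res; rewrite /TC /BC; apply: eq_bigr => i _; apply: eq_bigr => j ij.
apply: eq_bigr => k jk.
have ne (u v : 'I_n) : (u < v)%N -> u != v by move=> uv; rewrite -val_eqE neq_ltn uv.
have ik := ltn_trans ij jk.
by rewrite trip_cost_resolved ?ne // res ?mem_enum ?ne.
Qed.

End TripletCost.

Lemma ground_truth_antitone (R : realType) n (w : 'I_n -> 'I_n -> R) :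
  ground_truth w -> exists2 d : 'I_n -> 'I_n -> R, ultrametric d &
    forall x y u v, x != y -> u != v -> d x y <= d u v -> w u v <= w x y.
Proof.
case=> d [f [d_ultra _ f_anti w_eq]]; exists d => // x y u v xy uv le_d.
by rewrite !w_eq //; apply: f_anti le_d; case: d_ultra.
Qed.

Lemma ground_truth_ge_min (R : realType) n (w : 'I_n -> 'I_n -> R) x y z :
  ground_truth w -> x != y -> x != z -> y != z ->
  Num.min (w x z) (w y z) <= w x y.
Proof.
case/ground_truth_antitone=> d [_ _ _ _ dU] w_anti xy xz yz.
have := dU x y z; rewrite ge_min le_max.
by case/orP=> /(w_anti _ _ _ _ xy) ->; rewrite ?orbT.
Qed.

Lemma ground_truth_perfect_HC (R : realType) n (e : rel 'I_n) (w : 'I_n -> 'I_n -> R) :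
  (0 < n)%N -> sim_graph e w -> ground_truth w -> perfect_HC w.
Proof.
move=> n_gt0 [w_sym _ _] /ground_truth_antitone[d d_ultra w_anti].
have enum_ne : enum 'I_n != [::] by rewrite -size_eq0 size_enum_ord -lt0n.
have [wf_t leaves_t closest_t resolves_t] :=
  ultra_tree_spec d_ultra (enum_uniq 'I_n) enum_ne (eq_leq (size_enum_ord n)).
exists (ultra_tree d n (enum 'I_n)); split; first by rewrite /is_hctree wf_t leaves_t.
apply: TC_eq_BC => // x y z xy split_xyz.
have /andP[xz yz] := trip_split_neq split_xyz.
have [dxz dyz] := closest_t x y z xy (mem_enum _ z) split_xyz.
by split; apply: w_anti.
Qed.

Definition w_123 (R : realType) (x y : 'I_3) : R := if x == y then 0 else (x + y)%:R.

Definition tree_0_12 : hctree 3 :=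
  Node [:: Leaf ord0; Node [:: Leaf (Ordinal (isT : 1 < 3)%N); Leaf ord_max]].

Lemma w_123_sim_graph (R : realType) : sim_graph (fun _ _ => true) (@w_123 R).
Proof.
split=> // x y; rewrite /w_123; first by rewrite eq_sym addnC.
by case: eqP.
Qed.

Lemma w_123_perfect_HC (R : realType) : perfect_HC (@w_123 R).
Proof.
exists tree_0_12; split.
  rewrite /is_hctree /=; apply: uniq_perm; rewrite ?enum_uniq // => x.
  by rewrite mem_enum !inE; case: x => [[|[|[|?]]] ?].
rewrite /TC /BC; apply: eq_bigr => i _; apply: eq_bigr => j ij; apply: eq_bigr => k jk.
case: i j k ij jk => [[|[|[|?]]] Hi] // [[|[|[|?]]] Hj] // [[|[|[|?]]] Hk] //= _ _.
have no_ijk : trip_split tree_0_12 (Ordinal Hi) (Ordinal Hj) (Ordinal Hk) = false by [].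
have no_ikj : trip_split tree_0_12 (Ordinal Hi) (Ordinal Hk) (Ordinal Hj) = false by [].
have yes_jki : trip_split tree_0_12 (Ordinal Hj) (Ordinal Hk) (Ordinal Hi) by [].
rewrite /trip_cost no_ijk no_ikj yes_jki /w_123 /= -!natrD.
by rewrite min_l // le_min !ler_nat.
Qed.

Lemma w_123_not_ground_truth (R : realType) : ~ ground_truth (@w_123 R).
Proof.
move/(@ground_truth_ge_min _ _ _ ord0 (Ordinal (isT : 1 < 3)%N) ord_max)/(_ isT isT isT).
by rewrite /w_123 /= ge_min !ler_nat.
Qed.

Theorem theorem4 (R : realType) :
  (forall (n : nat) (e : rel 'I_n) (w : 'I_n -> 'I_n -> R),
      (0 < n)%N -> sim_graph e w -> ground_truth w -> perfect_HC w) /\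
  (exists (n : nat) (e : rel 'I_n) (w : 'I_n -> 'I_n -> R),
      [/\ sim_graph e w, perfect_HC w & ~ ground_truth w]).
Proof.
split; first exact: ground_truth_perfect_HC.
exists 3%N, (fun _ _ => true), (@w_123 R).
split; [exact: w_123_sim_graph | exact: w_123_perfect_HC |].
exact: w_123_not_ground_truth.
Qed.
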